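(* Assume $r$ is a prime number distinct from the characteristic of $k$. For $\gamma\in D_\infty^*\cong GL_r(k_\infty)$ put $\mathbb H_\gamma=\{(z,\gamma z):z\in\Omega_r\}\subset\Omega_r\times\Omega_r$. Let $\gamma\in D^*$ with $\mathbb H_\gamma\ne\mathbb H_1$, and suppose $\alpha\in\mathbb H_\gamma\cap\mathbb H_1$. Let $T_\alpha\Omega_r^2\cong\mathbb C_\infty^{r-1}\times\mathbb C_\infty^{r-1}$ be the tangent space of $\Omega_r\times\Omega_r$ at $\alpha$, and $T_\alpha\mathbb H_\gamma$, $T_\alpha\mathbb H_1$ the tangent spaces of $\mathbb H_\gamma$, $\mathbb H_1$ at $\alpha$ viewed as subspaces of it. Then $T_\alpha\mathbb H_\gamma\cap T_\alpha\mathbb H_1=\{0\}$.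
   Context: $k$ is a global function field, $\infty$ a fixed place, $k_\infty$ the completion, $\mathbb C_\infty$ the completion of an algebraic closure of $k_\infty$. $D$ is a central division algebra over $k$ of dimension $r^2$ with $D\otimes_kk_\infty\cong M_r(k_\infty)$, so $D^*\subset GL_r(k_\infty)$. $\Omega_r=\mathbb P^{r-1}(\mathbb C_\infty)\setminus\bigcup(k_\infty\text{-rational hyperplanes})$, viewed as a rigid analytic space (in affine coordinates, the set of $(z_1,\dots,z_{r-1})\in\mathbb C_\infty^{r-1}$ with $c_1z_1+\cdots+c_{r-1}z_{r-1}+c_r\ne0$ for all nonzero $(c_1,\dots,c_r)\in k_\infty^r$), with $GL_r(k_\infty)$ acting by fractional linear transformations. *)

(* C plays the role of C_infty; k and kinf are subfields of C
   given as predicates; the absolute value |.|_infty is absC : C -> R. *)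
From HB Require Import structures.
From mathcomp Require Import all_boot all_order all_algebra.
From mathcomp Require Import reals.
Set Implicit Arguments. Unset Strict Implicit. Unset Printing Implicit Defensive.
Import Order.TTheory GRing.Theory Num.Theory.
Local Open Scope ring_scope.

Section Defs.
Variables (R : realType) (C : closedFieldType) (absC : C -> R).

Definition is_nonarch_abs : Prop :=
  [/\ forall x, 0 <= absC x,
      forall x, absC x = 0 <-> x = 0,
      forall x y, absC (x * y) = absC x * absC y &
      forall x y, absC (x + y) <= Num.max (absC x) (absC y)].

Definition is_subfield (S : C -> Prop) : Prop :=
  [/\ S 0, S 1,
      forall x y, S x -> S y -> S (x - y),
      forall x y, S x -> S y -> S (x * y) &
      forall x, S x -> x != 0 -> S x^-1].

Definition prime_coefs (a : {poly C}) : Prop := forall i, exists m : nat, a`_i = m%:R.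

Definition in_prime_ratfun (t y : C) : Prop :=
  exists a b : {poly C}, [/\ prime_coefs a, prime_coefs b, b.[t] != 0 & y = a.[t] / b.[t]].

(* k is a global function field: a finite extension of F_p(t), t transcendental *)
Definition global_function_field (k : C -> Prop) : Prop :=
  is_subfield k /\
  exists p : nat, [/\ prime p, (p%:R : C) = 0 &
  exists t : C, [/\ k t,
    (forall a : {poly C}, prime_coefs a -> a != 0 -> a.[t] != 0) &
    exists (m : nat) (s : 'I_m -> C), (forall i, k (s i)) /\
      forall x, k x -> exists c : 'I_m -> C,
        (forall i, in_prime_ratfun t (c i)) /\ x = \sum_i c i * s i]].

(* the place infinity: absC restricted to k is a nontrivial absolute value *)
Definition nontrivial_on (k : C -> Prop) : Prop :=
  exists x, [/\ k x, absC x != 0 & absC x != 1].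

Definition cauchy (u : nat -> C) : Prop :=
  forall eps : R, 0 < eps -> exists N, forall m p, (N <= m)%N -> (N <= p)%N ->
    absC (u m - u p) < eps.

Definition converges_to (u : nat -> C) (l : C) : Prop :=
  forall eps : R, 0 < eps -> exists N, forall m, (N <= m)%N -> absC (u m - l) < eps.

Definition is_completion (k kinf : C -> Prop) : Prop :=
  [/\ is_subfield kinf, (forall x, k x -> kinf x),
      (forall x, kinf x -> forall eps : R, 0 < eps -> exists y, k y /\ absC (x - y) < eps) &
      (forall u, (forall m, kinf (u m)) -> cauchy u -> exists l, kinf l /\ converges_to u l)].

Definition algebraic_over (S : C -> Prop) (y : C) : Prop :=
  exists a : {poly C}, [/\ a != 0, forall i, S a`_i & root a y].

(* C (algebraically closed by its type) is the completion of an algebraic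
   closure of kinf: complete, and algebraic elements over kinf are dense *)
Definition is_Cinf (kinf : C -> Prop) : Prop :=
  (forall u, cauchy u -> exists l, converges_to u l) /\
  (forall x, forall eps : R, 0 < eps -> exists y, algebraic_over kinf y /\ absC (x - y) < eps).

(* D : a central division algebra over k of dimension r^2 (r = n.+1),
   realised inside M_r(kinf) via an isomorphism D (x)_k kinf = M_r(kinf) *)
Definition central_division_algebra_split (k kinf : C -> Prop) (n : nat)
  (D : 'M[C]_n.+1 -> Prop) : Prop :=
  [/\ forall g, D g -> forall i j, kinf (g i j),
      forall a, k a -> D a%:M,
      forall g h, D g -> D h -> D (g + h),
      forall g h, D g -> D h -> D (g *m h) &
    [/\
      forall g, D g -> g != 0 -> exists h, D h /\ h *m g = 1%:M,
      forall g, D g -> (forall h, D h -> g *m h = h *m g) -> exists a, k a /\ g = a%:M &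
      exists b : 'I_(n.+1 * n.+1) -> 'M[C]_n.+1,
        [/\ forall i, D (b i),
            forall g, D g -> exists c : 'I_(n.+1 * n.+1) -> C,
              (forall i, k (c i)) /\ g = \sum_i c i *: b i &
            forall c : 'I_(n.+1 * n.+1) -> C, (forall i, kinf (c i)) ->
              \sum_i c i *: b i = 0 -> forall i, c i = 0]]].

(* affine coordinates z in C^(r-1), homogeneous vector (z, 1) *)
Definition homog (n : nat) (z : 'cV[C]_n) : 'cV[C]_n.+1 :=
  \col_i (oapp (fun j => z j 0) 1 (unlift ord_max i)).

Definition dehomog (n : nat) (w : 'cV[C]_n.+1) : 'cV[C]_n :=
  \col_j (w (lift ord_max j) 0 / w ord_max 0).

Definition Omega (kinf : C -> Prop) (n : nat) (z : 'cV[C]_n) : Prop :=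
  forall c : 'rV[C]_n.+1, (forall i, kinf (c 0 i)) -> c != 0 -> (c *m homog z) 0 0 != 0.

Definition act (n : nat) (g : 'M[C]_n.+1) (z : 'cV[C]_n) : 'cV[C]_n :=
  dehomog (g *m homog z).

Definition Hgraph (kinf : C -> Prop) (n : nat) (g : 'M[C]_n.+1)
  (p : 'cV[C]_n * 'cV[C]_n) : Prop :=
  Omega kinf p.1 /\ p.2 = act g p.1.

Definition normcv (n : nat) (v : 'cV[C]_n) : R := \big[Num.max/0]_(i < n) absC (v i 0).

Definition pconv (n : nat) (x : nat -> 'cV[C]_n * 'cV[C]_n) (a : 'cV[C]_n * 'cV[C]_n) :=
  forall eps : R, 0 < eps -> exists N, forall m, (N <= m)%N ->
    normcv ((x m).1 - a.1) < eps /\ normcv ((x m).2 - a.2) < eps.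

(* tangent space at a of a (smooth) analytic subset H of C^(r-1) x C^(r-1),
   defined as the set of tangent vectors lim c_m (x_m - a), x_m in H, x_m -> a *)
Definition tangent (n : nat) (H : 'cV[C]_n * 'cV[C]_n -> Prop)
  (a v : 'cV[C]_n * 'cV[C]_n) : Prop :=
  exists (x : nat -> 'cV[C]_n * 'cV[C]_n) (c : nat -> C),
    [/\ forall m, H (x m), pconv x a &
        pconv (fun m => (c m *: ((x m).1 - a.1), c m *: ((x m).2 - a.2))) v].

End Defs.

(* At a point (a, a) of H_gamma /\ H_1 the homogeneous vector h = (a, 1) is an
   eigenvector of gamma, gamma h = lam h, and since a lies in Omega_r its
   coordinates are linearly independent over k_inf.  Hence a polynomial over
   k_inf vanishes at lam iff it kills gamma: the minimal polynomial p of gamma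
   over k_inf is irreducible, every root of the characteristic polynomial is a
   root of p, and deg p divides r.  As r is prime and gamma is not scalar
   (H_gamma <> H_1), deg p = r, and p is separable because r is prime to the
   characteristic.  A common tangent vector v has equal components, and
   differentiating z |-> gamma z at the fixed point a gives
   gamma u = lam u + t h for u = (v, 0).  Evaluating p(gamma) = 0 on u yields
   t p'(lam) = 0, so t = 0 and u is a lam-eigenvector with last coordinate 0;
   the rows e_r gamma^i (i < r) are independent since p has degree r, and they
   all kill u, so u = 0. *)
From HB Require Import structures.
From mathcomp Require Import all_boot all_order all_algebra.
From mathcomp Require Import reals boolp.
From mathcomp Require Import ring lra zify.
Import Order.TTheory GRing.Theory Num.Theory.
Local Open Scope ring_scope.
Set Implicit Arguments. Unset Strict Implicit. Unset Printing Implicit Defensive.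

Section SubfieldType.
Variables (C : closedFieldType) (S : C -> Prop).
Hypothesis S_subfield : is_subfield S.

(* [let _ := S_subfield] makes the predicate mention the hypothesis, so that
   the closure instance declared below can be found by unification. *)
Definition subfield_pred : {pred C} := fun x => let _ := S_subfield in `[< S x >].

Lemma subfield_predP x : reflect (S x) (x \in subfield_pred).
Proof. exact: asboolP. Qed.

Lemma subfield_pred_closed : divring_closed subfield_pred.
Proof.
case: S_subfield => S0 S1 SB SM SV; split.
- exact/subfield_predP.
- by move=> x y /subfield_predP Sx /subfield_predP Sy; apply/subfield_predP/SB.
move=> x y /subfield_predP Sx /subfield_predP Sy; apply/subfield_predP/SM => //.
by have [->|y0] := eqVneq y 0; [rewrite invr0 | apply: SV].
Qed.

HB.instance Definition _ :=
  GRing.isDivringClosed.Build C subfield_pred subfield_pred_closed.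

Inductive subfield_type := SubfieldElem x of x \in subfield_pred.
Definition subfield_val u := let: SubfieldElem x _ := u in x.
HB.instance Definition _ := [isSub for subfield_val].
HB.instance Definition _ := [Choice of subfield_type by <:].
HB.instance Definition _ := [SubChoice_isSubComUnitRing of subfield_type by <:].
HB.instance Definition _ :=
  [SubComUnitRing_isSubIntegralDomain of subfield_type by <:].
HB.instance Definition _ := [SubIntegralDomain_isSubField of subfield_type by <:].

Lemma subfield_matrix n m (M : 'M[C]_(n, m)) : (forall i j, S (M i j)) ->
  exists M' : 'M[subfield_type]_(n, m), map_mx val M' = M.
Proof.
move=> SM; exists (\matrix_(i, j) SubfieldElem (introT (subfield_predP _) (SM i j))).
by apply/matrixP => i j; rewrite !mxE.
Qed.

End SubfieldType.

Lemma horner_mx_eigenvector (R : comNzRingType) n (A : 'M[R]_n.+1) (h : 'cV_n.+1) lam P :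
  A *m h = lam *: h -> horner_mx A P *m h = P.[lam] *: h.
Proof.
move=> Ah; elim/poly_ind: P => [|P c IH].
  by rewrite rmorph0 mul0mx horner0 scale0r.
rewrite rmorphD rmorphM /= horner_mx_X horner_mx_C !hornerE mulmxDl -mulmxA Ah.
by rewrite -scalemxAr IH mul_scalar_mx scalerDl scalerA mulrC.
Qed.

Lemma horner_mx_generalized_eigenvector (R : comNzRingType) n
    (A : 'M[R]_n.+1) (h u : 'cV_n.+1) lam t P :
  A *m h = lam *: h -> A *m u = lam *: u + t *: h ->
  horner_mx A P *m u = P.[lam] *: u + (t * P^`().[lam]) *: h.
Proof.
move=> Ah Au; elim/poly_ind: P => [|P c IH].
  by rewrite rmorph0 mul0mx deriv0 !horner0 mulr0 !scale0r addr0.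
rewrite rmorphD rmorphM /= horner_mx_X horner_mx_C !hornerE.
rewrite derivD derivC derivM derivX addr0 !hornerE.
rewrite mulmxDl -mulmxA Au mulmxDr -!scalemxAr IH (horner_mx_eigenvector _ Ah).
rewrite mul_scalar_mx !scalerDr !scalerA !scalerDl mulrDr scalerDl.
rewrite (mulrC lam P.[lam]) (mulrCA lam t) (mulrC lam) -!addrA; congr (_ + _).
by rewrite addrA addrC.
Qed.

Lemma dvdpN_deriv (F : idomainType) (p : {poly F}) :
  p != 0 -> (size p).-1%:R != 0 :> F -> ~~ (p %| p^`()).
Proof.
move=> p0 nchar.
have p'0 : p^`() != 0.
  apply: contra nchar; case sp: (size p) => [|[|d]] //= p'0.
  have := congr1 (fun q : {poly F} => q`_d) (eqP p'0).
  have : lead_coef p != 0 by rewrite lead_coef_eq0.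
  rewrite /lead_coef sp /= coef_deriv coef0 => /negPf lc.
  by rewrite -[in X in X -> _]mulr_natr => /eqP; rewrite mulf_eq0 lc.
by apply: contraL (lt_size_deriv p0) => /(dvdp_leq p'0); rewrite leqNgt.
Qed.

Section IrreducibleRoots.
Variables (F : fieldType) (C : closedFieldType) (f : {rmorphism F -> C}).
Variable p : {poly F}.
Hypothesis p_irr : irreducible_poly p.

Lemma irredp_dvdp_common_root Q mu :
  root (map_poly f p) mu -> root (map_poly f Q) mu -> p %| Q.
Proof.
move=> pmu Qmu; apply: dvdp_trans (dvdp_gcdr p Q).
have /andP[_ -> //] : gcdp p Q %= p.
apply: p_irr; last exact: dvdp_gcdl.
rewrite -(size_map_poly f); apply/closed_rootP; exists mu.
by rewrite gcdp_map root_gcd pmu Qmu.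
Qed.

Lemma irredp_size_dvd Q : Q != 0 ->
  (forall mu, root (map_poly f Q) mu -> root (map_poly f p) mu) ->
  ((size p).-1 %| (size Q).-1)%N.
Proof.
elim: (size Q).+1 {-2}Q (ltnSn (size Q)) => // m IH {}Q sQ Q0 rootsQ.
have [->|sQ1] := eqVneq (size Q) 1%N; first exact: dvdn0.
have [mu Qmu] : exists mu, root (map_poly f Q) mu.
  by apply/closed_rootP; rewrite size_map_poly.
have /dvdpP[Q' EQ] := irredp_dvdp_common_root (rootsQ _ Qmu) Qmu.
have Q'0 : Q' != 0 by apply: contraNneq Q0 => e; rewrite EQ e mul0r.
have p1 : (1 < size p)%N by case: p_irr.
have Q'1 : (0 < size Q')%N by rewrite size_poly_gt0.
have sQE : size Q = (size Q' + size p).-1 by rewrite EQ size_mul // irredp_neq0.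
have -> : (size Q).-1 = ((size Q').-1 + (size p).-1)%N.
  by rewrite sQE -!subn1; lia.
apply: dvdn_add (dvdnn _); apply: IH => //; first by rewrite sQE -!subn1 in sQ *; lia.
by move=> nu Q'nu; apply: rootsQ; rewrite EQ rmorphM rootM Q'nu.
Qed.

End IrreducibleRoots.

Section FreeEigenvector.
Variables (F : fieldType) (C : closedFieldType) (f : {rmorphism F -> C}).
Variables (n : nat) (G : 'M[F]_n.+1) (h : 'cV[C]_n.+1) (lam : C).
Hypothesis h_free : forall c : 'rV[F]_n.+1, c != 0 -> (map_mx f c *m h) 0 0 != 0.
Hypothesis h_max : h ord_max 0 = 1.
Hypothesis Gh : map_mx f G *m h = lam *: h.

Local Notation p := (mxminpoly G).

Lemma free_eigenvector_neq0 : h != 0.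
Proof. by apply: contra_eq_neq h_max => ->; rewrite mxE eq_sym oner_neq0. Qed.

Lemma horner_mx_eq0_of_root Q : root (map_poly f Q) lam -> horner_mx G Q = 0.
Proof.
move=> /eqP Qlam; apply/row_matrixP => i; rewrite row0.
apply/eqP/negPn/negP => /h_free; rewrite map_row -row_mul map_horner_mx.
by rewrite (horner_mx_eigenvector _ Gh) Qlam scale0r row0 mxE eqxx.
Qed.

Lemma dvd_mxminpoly_root Q : (p %| Q) = root (map_poly f Q) lam.
Proof.
apply/idP/idP => [/dvdpP[Q' ->]|/horner_mx_eq0_of_root/mxminpoly_min //].
have : map_mx f (horner_mx G p) *m h = 0 by rewrite mx_root_minpoly map_mx0 mul0mx.
rewrite map_horner_mx (horner_mx_eigenvector _ Gh) => /eqP.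
rewrite scaler_eq0 (negPf free_eigenvector_neq0) orbF => plam.
by rewrite rmorphM rootM; apply/orP; right.
Qed.

Lemma mxminpoly_irreducible : irreducible_poly p.
Proof.
split=> [|q sq qp]; first by rewrite size_mxminpoly ltnS mxminpoly_nonconstant.
have /dvdpP[s Ep] := qp; rewrite /eqp qp /=.
have : root (map_poly f (s * q)) lam by rewrite -Ep -dvd_mxminpoly_root.
rewrite rmorphM rootM -!dvd_mxminpoly_root => /orP[ps|//].
have p0 : p != 0 by rewrite monic_neq0 ?mxminpoly_monic.
have s0 : s != 0 by apply: contraNneq p0 => s0; rewrite Ep s0 mul0r.
have q0 : q != 0 by apply: contraNneq p0 => q0; rewrite Ep q0 mulr0.
have := dvdp_leq s0 ps; rewrite Ep size_mul // -subn1.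
by move: sq; rewrite -size_poly_gt0 in q0; lia.
Qed.

Lemma degree_mxminpoly_dvd : (degree_mxminpoly G %| n.+1)%N.
Proof.
have := @irredp_size_dvd _ _ f _ mxminpoly_irreducible _ (monic_neq0 (char_poly_monic G)).
rewrite size_mxminpoly size_char_poly; apply=> mu.
rewrite map_char_poly -root_mxminpoly => rmu.
apply: root_dvdp rmu; apply: mxminpoly_min.
by rewrite -map_horner_mx mx_root_minpoly map_mx0.
Qed.

Lemma degree_mxminpoly_prime : prime n.+1 -> ~~ is_scalar_mx G ->
  degree_mxminpoly G = n.+1.
Proof.
move=> /primeP[_ /(_ _ degree_mxminpoly_dvd)] /orP[/eqP d1|/eqP //].
by rewrite -mxminpoly_linear_is_scalar d1.
Qed.

Section FullDegree.
Hypothesis p_full : degree_mxminpoly G = n.+1.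
Hypothesis n1_neq0 : n.+1%:R != 0 :> C.

Lemma root_mxminpoly_deriv : ~~ root (map_poly f p^`()) lam.
Proof.
rewrite -dvd_mxminpoly_root; apply: dvdpN_deriv.
  by rewrite monic_neq0 ?mxminpoly_monic.
by rewrite size_mxminpoly p_full -(fmorph_eq0 f) rmorph_nat.
Qed.

Lemma generalized_eigenvector_scale_eq0 (u : 'cV[C]_n.+1) t :
  map_mx f G *m u = lam *: u + t *: h -> t = 0.
Proof.
move=> Gu; have := horner_mx_generalized_eigenvector (map_poly f p) Gh Gu.
rewrite -map_horner_mx mx_root_minpoly map_mx0 mul0mx deriv_map.
have /rootP -> : root (map_poly f p) lam by rewrite -dvd_mxminpoly_root.
rewrite scale0r add0r => /esym/eqP; rewrite scaler_eq0 (negPf free_eigenvector_neq0).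
by rewrite orbF mulf_eq0 -rootE (negPf root_mxminpoly_deriv) orbF => /eqP.
Qed.

Definition last_row_powers : 'M[F]_n.+1 := \matrix_(i < n.+1) row ord_max (G ^+ i).

Lemma last_row_powers_unit : last_row_powers \in unitmx.
Proof.
rewrite unitmxE unitfE; apply/negP => /det0P[x x0 xB].
pose P : {poly F} := \sum_(i < n.+1) x 0 i *: 'X^i.
have GP : horner_mx G P = \sum_(i < n.+1) x 0 i *: G ^+ i.
  rewrite /P raddf_sum /=; apply: eq_bigr => i _.
  by rewrite linearZ /= rmorphXn /= horner_mx_X.
have row_P : row ord_max (horner_mx G P) = 0.
  rewrite -xB mulmx_sum_row GP; apply/rowP => j.
  by rewrite !mxE !summxE; apply: eq_bigr => i _; rewrite !mxE.
have : p %| P.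
  rewrite dvd_mxminpoly_root; apply/rootP.
  have := congr1 (fun r => (map_mx f r *m h) 0 0) row_P.
  rewrite /= map_row -row_mul map_horner_mx (horner_mx_eigenvector _ Gh).
  by rewrite map_mx0 mul0mx !mxE h_max mulr1.
have sP : (size P <= n.+1)%N.
  apply: (leq_trans (size_sum _ _ _)); apply/bigmax_leqP => i _.
  by apply: leq_trans (size_scale_leq _ _) _; rewrite size_polyXn.
have [P0 _|P0 /(dvdp_leq P0)] := eqVneq P 0; last first.
  by rewrite size_mxminpoly p_full ltnNge sP.
apply/negP: x0; rewrite negbK; apply/eqP/rowP => i.
have := congr1 (fun q : {poly F} => q`_i) P0.
rewrite coef_sum coef0 mxE (bigD1 i) //= coefZ coefXn eqxx mulr1 big1 ?addr0 //.
by move=> j ji; rewrite coefZ coefXn (_ : _ == _ = false) ?mulr0 // eq_sym; apply: negPf.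
Qed.

Lemma eigenvector_eq0 (u : 'cV[C]_n.+1) :
  map_mx f G *m u = lam *: u -> u ord_max 0 = 0 -> u = 0.
Proof.
move=> Gu u_max; have uB : map_mx f last_row_powers \in unitmx.
  by rewrite map_unitmx last_row_powers_unit.
rewrite -(mulKmx uB u) (_ : _ *m u = 0) ?mulmx0 //.
apply/row_matrixP => i; rewrite row_mul row0 -map_row rowK map_row -row_mul.
have -> : map_mx f (G ^+ i) = horner_mx (map_mx f G) ('X ^+ i).
  by rewrite !rmorphXn /= horner_mx_X.
rewrite (horner_mx_eigenvector _ Gu).
by apply/rowP => j; rewrite hornerXn !mxE ord1 u_max mulr0.
Qed.

Lemma generalized_eigenvector_eq0 (u : 'cV[C]_n.+1) t :
  map_mx f G *m u = lam *: u + t *: h -> u ord_max 0 = 0 -> u = 0.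
Proof.
move=> Gu; apply: eigenvector_eq0.
by rewrite Gu (generalized_eigenvector_scale_eq0 Gu) scale0r addr0.
Qed.

End FullDegree.
End FreeEigenvector.

Section NonarchimedeanLimits.
Variables (R : realType) (C : closedFieldType) (absC : C -> R).
Hypothesis absC_nonarch : is_nonarch_abs absC.

Lemma absC_ge0 x : 0 <= absC x. Proof. by case: absC_nonarch. Qed.
Lemma absC_eq0 x : absC x = 0 <-> x = 0. Proof. by case: absC_nonarch. Qed.
Lemma absCM x y : absC (x * y) = absC x * absC y. Proof. by case: absC_nonarch. Qed.
Lemma absCD x y : absC (x + y) <= Num.max (absC x) (absC y).
Proof. by case: absC_nonarch. Qed.

Lemma absC0 : absC 0 = 0. Proof. exact/absC_eq0. Qed.

Lemma absC1 : absC 1 = 1.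
Proof.
have n0 : absC 1 != 0 by apply/eqP => /absC_eq0/eqP; rewrite oner_eq0.
by apply: (mulfI n0); rewrite -absCM !mulr1.
Qed.

Lemma absCN x : absC (- x) = absC x.
Proof.
suff absCN1 : absC (-1) = 1 by rewrite -mulN1r absCM absCN1 mul1r.
have : absC (-1) ^+ 2 == 1 by rewrite expr2 -absCM mulrNN mulr1 absC1.
rewrite sqrf_eq1 => /orP[/eqP //|/eqP absCN1].
by have := absC_ge0 (-1); rewrite absCN1 oppr_ge0 ler10.
Qed.

Lemma absCB x y : absC (x - y) = absC (y - x).
Proof. by rewrite -absCN opprB. Qed.

Local Notation "u --> l" := (converges_to absC u l) (at level 70).

Lemma converges_to_cst (c : C) : (fun=> c) --> c.
Proof. by move=> e e0; exists 0%N => m _; rewrite subrr absC0. Qed.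

Lemma eq_converges_to u v a : u =1 v -> u --> a -> v --> a.
Proof. by move=> uv ua e /ua[N Hu]; exists N => m /Hu; rewrite uv. Qed.

Lemma converges_toD u v a b : u --> a -> v --> b -> (fun m => u m + v m) --> a + b.
Proof.
move=> ua vb e e0; have [N1 Hu] := ua e e0; have [N2 Hv] := vb e e0.
exists (maxn N1 N2) => m; rewrite geq_max => /andP[/Hu um /Hv vm].
rewrite (_ : _ - _ = (u m - a) + (v m - b)); last by ring.
by apply: le_lt_trans (absCD _ _) _; rewrite gt_max um vm.
Qed.

Lemma converges_toN u a : u --> a -> (fun m => - u m) --> - a.
Proof. by move=> ua e /ua[N Hu]; exists N => m /Hu; rewrite -opprD absCN. Qed.

Lemma converges_toB u v a b : u --> a -> v --> b -> (fun m => u m - v m) --> a - b.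
Proof. by move=> ua vb; apply: converges_toD ua (converges_toN vb). Qed.

Lemma converges_toM u v a b : u --> a -> v --> b -> (fun m => u m * v m) --> a * b.
Proof.
move=> ua vb e e0.
have pa : 0 < 1 + absC a by rewrite ltr_wpDr ?absC_ge0.
have pb : 0 < 1 + absC b by rewrite ltr_wpDr ?absC_ge0.
have [N1 Hu] := ua (e / (1 + absC b)) (divr_gt0 e0 pb).
have e2 : 0 < Num.min 1 (e / (1 + absC a)) by rewrite lt_min ltr01 divr_gt0.
have [N2 Hv] := vb _ e2.
exists (maxn N1 N2) => m; rewrite geq_max => /andP[/Hu um /Hv].
rewrite lt_min => /andP[vm1 vme].
rewrite (_ : _ - _ = (u m - a) * v m + a * (v m - b)); last by ring.
apply: le_lt_trans (absCD _ _) _; rewrite !absCM gt_max; apply/andP; split.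
  have vbound : absC (v m) <= 1 + absC b.
    rewrite -[v m](subrK b); apply: le_trans (absCD _ _) _.
    by rewrite ge_max (ltW (ltr_wpDr _ vm1)) ?absC_ge0 // lerDr ler01.
  move: um; rewrite ltr_pdivlMr // => um.
  have := absC_ge0 (u m - a); have := absC_ge0 (v m); nra.
move: vme; rewrite ltr_pdivlMr // => vme.
have := absC_ge0 (v m - b); have := absC_ge0 a; nra.
Qed.

Lemma converges_to_sum (I : Type) (s : seq I) (F : I -> nat -> C) (L : I -> C) :
  (forall i, F i --> L i) ->
  (fun m => \sum_(i <- s) F i m) --> \sum_(i <- s) L i.
Proof.
move=> FL; elim: s => [|i s IH].
  by rewrite big_nil; apply: eq_converges_to (converges_to_cst 0) => m; rewrite big_nil.
rewrite big_cons; apply: eq_converges_to (converges_toD (FL i) IH) => m.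
by rewrite big_cons.
Qed.

Lemma converges_to_mulmx p q (M : 'M[C]_(p, q)) (x : nat -> 'cV[C]_q) (X : 'cV[C]_q) :
  (forall j, (fun m => x m j 0) --> X j 0) ->
  forall i, (fun m => (M *m x m) i 0) --> (M *m X) i 0.
Proof.
move=> xX i; rewrite mxE; apply: eq_converges_to => [m|]; first by rewrite mxE.
by apply: converges_to_sum => j; apply: converges_toM (converges_to_cst _) (xX j).
Qed.

Lemma converges_to_eventually_unique u v a b : u --> a -> v --> b ->
  (exists N, forall m, (N <= m)%N -> u m = v m) -> a = b.
Proof.
move=> ua vb [N0 uv]; apply/subr0_eq/absC_eq0/eqP.
rewrite eq_le absC_ge0 andbT; apply/ler_addgt0Pr => e e0; rewrite add0r.
have [N1 Hu] := ua e e0; have [N2 Hv] := vb e e0.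
pose m := maxn N0 (maxn N1 N2).
rewrite (_ : a - b = (a - u m) + (v m - b)); last by rewrite uv ?leq_maxl //; ring.
apply/ltW/(le_lt_trans (absCD _ _)); rewrite gt_max absCB Hu ?Hv //.
  by rewrite (leq_trans (leq_maxr N1 N2)) ?leq_maxr.
by rewrite (leq_trans (leq_maxl N1 N2)) ?leq_maxr.
Qed.

Lemma pconv_coord n (x : nat -> 'cV[C]_n * 'cV[C]_n) a : pconv absC x a ->
  forall i, (fun m => (x m).1 i 0) --> a.1 i 0 /\ (fun m => (x m).2 i 0) --> a.2 i 0.
Proof.
have entry_le (v : 'cV[C]_n) i : absC (v i 0) <= normcv absC v.
  by rewrite /normcv (bigD1 i) //= le_max lexx.
move=> xa i; split=> e /xa[N Hx]; exists N => m /Hx[x1 x2].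
  by apply: le_lt_trans x1; apply: le_trans (entry_le _ i); rewrite !mxE.
by apply: le_lt_trans x2; apply: le_trans (entry_le _ i); rewrite !mxE.
Qed.

End NonarchimedeanLimits.

Section Coordinates.
Variables (C : closedFieldType) (n : nat).
Implicit Types (z a : 'cV[C]_n) (g : 'M[C]_n.+1).

Definition extend0 z : 'cV[C]_n.+1 := \col_i oapp (fun j => z j 0) 0 (unlift ord_max i).

Lemma extend0_lift z j : extend0 z (lift ord_max j) 0 = z j 0.
Proof. by rewrite mxE liftK. Qed.

Lemma extend0_max z : extend0 z ord_max 0 = 0.
Proof. by rewrite mxE unlift_none. Qed.

Lemma homog_lift z j : homog z (lift ord_max j) 0 = z j 0.
Proof. by rewrite mxE liftK. Qed.

Lemma homog_max z : homog z ord_max 0 = 1.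
Proof. by rewrite mxE unlift_none. Qed.

Lemma extend0Z c z : extend0 (c *: z) = c *: extend0 z.
Proof.
apply/colP => i; rewrite [RHS]mxE.
case: (unliftP ord_max i) => [j|] ->.
  by rewrite !extend0_lift mxE.
by rewrite !extend0_max mulr0.
Qed.

Lemma homogB z a : homog z - homog a = extend0 (z - a).
Proof.
apply/colP => i; case: (unliftP ord_max i) => [j|] ->; rewrite !mxE.
  by rewrite liftK /= !mxE.
by rewrite unlift_none subrr.
Qed.

Lemma act_lift g z j :
  act g z j 0 = (g *m homog z) (lift ord_max j) 0 / (g *m homog z) ord_max 0.
Proof. by rewrite mxE. Qed.

Lemma act_scalar b z : b != 0 -> act b%:M z = z.
Proof.
move=> b0; apply/colP => j; rewrite act_lift !mul_scalar_mx !mxE.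
by rewrite liftK unlift_none /= mulr1 mulrC mulKf.
Qed.

Lemma act1 z : act 1%:M z = z.
Proof. exact/act_scalar/oner_neq0. Qed.

Lemma act_fixed_eigen g a : (g *m homog a) ord_max 0 != 0 -> act g a = a ->
  g *m homog a = (g *m homog a) ord_max 0 *: homog a.
Proof.
move=> lam0 ga; apply/colP => i; rewrite [RHS]mxE.
case: (unliftP ord_max i) => [j|] ->; last by rewrite homog_max mulr1.
rewrite homog_lift; have -> : a j 0 = act g a j 0 by rewrite ga.
by rewrite act_lift mulrC divfK.
Qed.

(* The difference quotient of [act g] at its fixed point [a], with the
   denominator cleared. *)
Lemma act_sub_fixed g a z i (lam := (g *m homog a) ord_max 0) :
  g *m homog a = lam *: homog a -> (g *m homog z) ord_max 0 != 0 ->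
  (g *m homog z) ord_max 0 * extend0 (act g z - a) i 0 =
  (g *m extend0 (z - a)) i 0 - (g *m extend0 (z - a)) ord_max 0 * homog a i 0.
Proof.
move=> ga; rewrite -[extend0 (z - a)]homogB mulmxBr ga /act.
move: (g *m homog z) => w w0.
case: (unliftP ord_max i) => [j|] ->; rewrite !mxE ?liftK ?unlift_none /= ?mxE.
  by field.
by rewrite mulr0 !mulr1 subrr.
Qed.

End Coordinates.

Section Graphs.
Variables (R : realType) (C : closedFieldType) (absC : C -> R) (kinf : C -> Prop).
Hypothesis kinf_subfield : is_subfield kinf.
Hypothesis absC_nonarch : is_nonarch_abs absC.

Local Notation "u --> l" := (converges_to absC u l) (at level 70).

Lemma Omega_free n (z : 'cV[C]_n) : Omega kinf z ->
  forall c : 'rV[subfield_type kinf_subfield]_n.+1,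
  c != 0 -> (map_mx val c *m homog z) 0 0 != 0.
Proof.
move=> Oz c c0; apply: Oz => [i|]; first by rewrite mxE; apply/subfield_predP/valP.
apply: contra c0 => /eqP/matrixP cval; apply/eqP/matrixP => i j; apply: val_inj.
by have := cval i j; rewrite !mxE.
Qed.

Lemma Omega_fixed_last_neq0 n (g : 'M[C]_n.+1) z : (0 < n)%N ->
  Omega kinf z -> act g z = z -> (g *m homog z) ord_max 0 != 0.
Proof.
move=> n_gt0 Oz gz; apply/negP => /eqP w0; pose j0 : 'I_n := Ordinal n_gt0.
have z0 : z j0 0 = 0 by rewrite -gz act_lift w0 invr0 mulr0.
suff : ((delta_mx 0 (lift ord_max j0) : 'rV[C]_n.+1) *m homog z) 0 0 != 0.
  by rewrite -rowE mxE homog_lift z0 eqxx.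
apply: Oz => [i|]; first by case: kinf_subfield => k0 k1 *; rewrite mxE; case: (_ && _).
apply/negP => /eqP/matrixP/(_ 0 (lift ord_max j0))/eqP.
by rewrite !mxE !eqxx oner_eq0.
Qed.

Lemma Hgraph_scalar n (b : C) : b != 0 ->
  forall p : 'cV[C]_n * 'cV[C]_n, Hgraph kinf b%:M p <-> Hgraph kinf 1%:M p.
Proof. by move=> b0 p; rewrite /Hgraph act_scalar ?act1. Qed.

Lemma Hgraph_neq_nonscalar n (g : 'M[C]_n.+1) : g != 0 ->
  ~ (forall p, Hgraph kinf g p <-> Hgraph kinf 1%:M p) -> ~~ is_scalar_mx g.
Proof.
move=> g0 H_neq; apply/negP => /is_scalar_mxP[b gb]; apply: H_neq; rewrite gb.
by apply: Hgraph_scalar; apply: contraNneq g0 => b0; rewrite gb b0 raddf0.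
Qed.

Lemma tangent_diagonal n (alpha v : 'cV[C]_n * 'cV[C]_n) :
  Hgraph kinf 1%:M alpha -> tangent absC (Hgraph kinf 1%:M) alpha v -> v.2 = v.1.
Proof.
move=> [_ alpha_diag] [x [c [xH _ xv]]]; apply/colP => i.
have [v1 v2] := pconv_coord xv i.
apply: (converges_to_eventually_unique absC_nonarch v2 v1); exists 0%N => m _ /=.
by case: (xH m) => _ ->; rewrite alpha_diag !act1.
Qed.

Lemma converges_to_extend0 n (x : nat -> 'cV[C]_n) (X : 'cV[C]_n) :
  (forall j, (fun m => x m j 0) --> X j 0) ->
  forall i, (fun m => extend0 (x m) i 0) --> extend0 X i 0.
Proof.
move=> xX i; case: (unliftP ord_max i) => [j|] ->.
  by rewrite extend0_lift; apply: eq_converges_to (xX j) => m; rewrite extend0_lift.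
rewrite extend0_max; apply: eq_converges_to (converges_to_cst absC_nonarch _) => m.
by rewrite extend0_max.
Qed.

Lemma converges_to_homog n (x : nat -> 'cV[C]_n) (X : 'cV[C]_n) :
  (forall j, (fun m => x m j 0) --> X j 0) ->
  forall i, (fun m => homog (x m) i 0) --> homog X i 0.
Proof.
move=> xX i; case: (unliftP ord_max i) => [j|] ->.
  by rewrite homog_lift; apply: eq_converges_to (xX j) => m; rewrite homog_lift.
rewrite homog_max; apply: eq_converges_to (converges_to_cst absC_nonarch _) => m.
by rewrite homog_max.
Qed.

Lemma tangent_graph_fixed n (g : 'M[C]_n.+1) (a : 'cV[C]_n) v
    (lam := (g *m homog a) ord_max 0) :
  lam != 0 -> g *m homog a = lam *: homog a ->
  tangent absC (Hgraph kinf g) (a, a) v ->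
  g *m extend0 v.1 = lam *: extend0 v.2 + (g *m extend0 v.1) ord_max 0 *: homog a.
Proof.
move=> lam0 ga [x [c [xH xa xv]]].
pose s m := (g *m homog (x m).1) ord_max 0.
pose u m := c m *: ((x m).1 - a); pose w m := c m *: ((x m).2 - a).
have s_lam : s --> lam := converges_to_mulmx absC_nonarch g
  (converges_to_homog (fun j => proj1 (pconv_coord xa j))) ord_max.
have gu_v i : (fun m => (g *m extend0 (u m)) i 0) --> (g *m extend0 v.1) i 0 :=
  converges_to_mulmx absC_nonarch g
    (converges_to_extend0 (fun j => proj1 (pconv_coord xv j))) i.
have w_v i : (fun m => extend0 (w m) i 0) --> extend0 v.2 i 0 :=
  converges_to_extend0 (fun j => proj2 (pconv_coord xv j)) i.
have [N s_neq0] : exists N, forall m, (N <= m)%N -> s m != 0.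
  have lam_pos : 0 < absC lam.
    rewrite lt_def absC_ge0 // andbT.
    by apply: contra lam0 => /eqP/(absC_eq0 absC_nonarch)->.
  have [N sN] := s_lam _ lam_pos; exists N => m /sN.
  by apply: contraTneq => ->; rewrite sub0r absCN // ltxx.
have ev i m : (N <= m)%N -> s m * extend0 (w m) i 0 =
    (g *m extend0 (u m)) i 0 - (g *m extend0 (u m)) ord_max 0 * homog a i 0.
  move=> /s_neq0 sm0; have [_ x2] := xH m.
  rewrite /w /u x2 !extend0Z -!scalemxAr ![(_ *: _ : 'M_(_, _)) _ _]mxE mulrCA.
  by rewrite (act_sub_fixed _ ga sm0); ring.
apply/colP => i; have := converges_to_eventually_unique absC_nonarch
  (converges_toM absC_nonarch s_lam (w_v i))
  (converges_toB absC_nonarch (gu_v i)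
     (converges_toM absC_nonarch (gu_v ord_max) (converges_to_cst absC_nonarch _)))
  (ex_intro _ N (ev i)).
by rewrite [(_ + _ : 'M_(_, _)) _ _]mxE ![(_ *: _ : 'M_(_, _)) _ _]mxE => ->; ring.
Qed.

End Graphs.

Unset Implicit Arguments.

Theorem lemma7p2 (R : realType) (C : closedFieldType) (absC : C -> R)
  (k kinf : C -> Prop) (n : nat) (D : 'M[C]_n.+1 -> Prop)
  (gamma : 'M[C]_n.+1) (alpha : 'cV[C]_n * 'cV[C]_n) :
  is_nonarch_abs absC ->
  global_function_field k ->
  nontrivial_on absC k ->
  is_completion absC k kinf ->
  is_Cinf absC kinf ->
  central_division_algebra_split k kinf D ->
  prime n.+1 ->
  n.+1 \notin [pchar C] ->
  D gamma -> gamma != 0 ->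
  ~ (forall p, Hgraph kinf gamma p <-> Hgraph kinf 1%:M p) ->
  Hgraph kinf gamma alpha -> Hgraph kinf 1%:M alpha ->
  forall v, tangent absC (Hgraph kinf gamma) alpha v ->
            tangent absC (Hgraph kinf 1%:M) alpha v -> v = (0, 0).
Proof.
move=> absC_nonarch _ _ [kinf_subfield _ _ _] _ [D_kinf _ _ _ _] r_prime r_nchar
  D_gamma gamma_neq0 H_neq [_ alpha_gamma] alpha_1 v T_gamma T_1.
have v21 := tangent_diagonal absC_nonarch alpha_1 T_1.
have alphaE : alpha = (alpha.1, alpha.1).
  by case: alpha_1 => _ e; rewrite {1}[alpha]surjective_pairing e act1.
set a := alpha.1 in alphaE alpha_gamma.
have a_fixed : act gamma a = a by rewrite alphaE /= in alpha_gamma.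
case: alpha_1 => Omega_a _; rewrite -/a in Omega_a.
have n_gt0 : (0 < n)%N by rewrite lt0n; apply: contraTneq r_prime => ->.
have lam_neq0 := Omega_fixed_last_neq0 kinf_subfield n_gt0 Omega_a a_fixed.
have gamma_h := act_fixed_eigen lam_neq0 a_fixed.
rewrite alphaE in T_gamma.
have := tangent_graph_fixed absC_nonarch lam_neq0 gamma_h T_gamma; rewrite v21.
have [G G_gamma] := subfield_matrix kinf_subfield (D_kinf _ D_gamma).
rewrite -G_gamma in gamma_h * => gamma_u.
have h_free := Omega_free (kinf_subfield := kinf_subfield) Omega_a.
have G_nscalar : ~~ is_scalar_mx G.
  apply: contra (Hgraph_neq_nonscalar gamma_neq0 H_neq).
  rewrite -G_gamma => /is_scalar_mxP[b ->].
  by rewrite map_scalar_mx scalar_mx_is_scalar.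
have G_full := degree_mxminpoly_prime h_free (homog_max a) gamma_h r_prime G_nscalar.
have r_neq0 : n.+1%:R != 0 :> C by move: r_nchar; rewrite inE /= r_prime.
have := generalized_eigenvector_eq0 h_free (homog_max a) gamma_h G_full r_neq0 gamma_u.
move=> /(_ (extend0_max _)) u0.
have v10 : v.1 = 0 by apply/colP => j; rewrite -extend0_lift u0 !mxE.
by rewrite [v]surjective_pairing v21 v10.
Qed.
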